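(* Let $(\mathcal{Y},d_{\mathcal{Y}})$ be a complete metric space admitting a conical geodesic bicombing and admitting a quantization $(Q_q:\mathbb{R}^{D_q}\to\mathcal{Y})_{q\in\mathbb{N}_+}$. Let $\beta:(\mathcal{P}_1(\mathcal{Y}),W_1)\to\mathcal{Y}$ be a 1-Lipschitz barycenter map (i.e. $\beta(\delta_y)=y$ for all $y$). Then $(\mathcal{Y},d_{\mathcal{Y}})$ is a QAS space with mixing function $\eta(w,(y_i)_{i=1}^N)=\beta\big(\sum_{i=1}^Nw_i\delta_{y_i}\big)$ and quantized mixing function $$\hat\eta(w,(z_i)_{i=1}^N)=\beta\Big(\sum_{i=1}^Nw_i\,\delta_{Q_q(z_i)}\Big),\qquad w\in\Delta_N,\ z_i\in\mathbb{R}^{D_q}.$$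
   Context: A geodesic bicombing is a map $\sigma:\mathcal{Y}\times\mathcal{Y}\times[0,1]\to\mathcal{Y}$ with $\sigma(x,\tilde x,0)=x$, $\sigma(x,\tilde x,1)=\tilde x$ and $d(\sigma(x,\tilde x,t),\sigma(x,\tilde x,s))=|t-s|d(x,\tilde x)$; it is conical if $d(\sigma(x,\tilde x,t),\sigma(x',\tilde x',t))\le(1-t)d(x,x')+td(\tilde x,\tilde x')$. (A complete metric space admits a conical geodesic bicombing iff it admits a 1-Lipschitz barycenter map $\beta:\mathcal{P}_1(\mathcal{Y})\to\mathcal{Y}$.) $\mathcal{Y}$ is approximately simplicial with mixing function $\eta:\bigcup_N\Delta_N\times\mathcal{Y}^N\to\mathcal{Y}$ if for some $C_\eta\ge1$, $p\in\mathbb{N}_+$: $d(\eta(w,\mathbf y),y_i)\le C_\eta(\sum_jd(y_i,y_j)^pw_j)^{1/p}$ for all $N,w\in\Delta_N,\mathbf y\in\mathcal{Y}^N,i$. A quantization is a family $Q_q:\mathbb{R}^{D_q}\to\mathcal{Y}$ such that for every $z\in\mathbb{R}^{D_q}$ there is $\tilde z\in\mathbb{R}^{D_{q+1}}$ with $Q_q(z)=Q_{q+1}(\tilde z)$, every $y$ is approximated arbitrarily well by some $Q_q(z)$, and for each compact $K\subseteq\mathcal{Y}$ and $\epsilon>0$, $\inf\{D_q:\forall y\in K\ \exists z\in\mathbb{R}^{D_q},\,d(y,Q_q(z))<\epsilon\}$ is finite. A QAS space is a quantizable approximately simplicial space equipped with $\hat\eta(w,Z)=\eta(w,(Q_q(Z_1),\dots,Q_q(Z_N)))$.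 *)

From HB Require Import structures.
From mathcomp Require Import all_boot all_order all_algebra.
From mathcomp Require Import all_classical all_reals.
From mathcomp Require Import Rstruct exp.
Set Implicit Arguments. Unset Strict Implicit. Unset Printing Implicit Defensive.
Import Order.TTheory GRing.Theory Num.Theory.
Local Open Scope ring_scope.

Notation R := Rdefinitions.R.

Section Defs.
Variable Y : choiceType.
Variable d : Y -> Y -> R.

Definition is_metric : Prop :=
  [/\ forall x y, 0 <= d x y,
      forall x y, d x y = 0 <-> x = y,
      forall x y, d x y = d y x
    & forall x y z, d x z <= d x y + d y z].

Definition cauchy_seq (u : nat -> Y) : Prop :=
  forall eps : R, 0 < eps -> exists N : nat, forall m n : nat,
    (N <= m)%N -> (N <= n)%N -> d (u m) (u n) < eps.

Definition converges_to (u : nat -> Y) (l : Y) : Prop :=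
  forall eps : R, 0 < eps -> exists N : nat, forall n : nat,
    (N <= n)%N -> d (u n) l < eps.

Definition complete_metric : Prop :=
  forall u : nat -> Y, cauchy_seq u -> exists l, converges_to u l.

Definition d_open (U : Y -> Prop) : Prop :=
  forall x, U x -> exists r : R, 0 < r /\ forall y, d x y < r -> U y.

Definition d_compact (K : Y -> Prop) : Prop :=
  forall (I : Type) (U : I -> Y -> Prop),
    (forall i, d_open (U i)) -> (forall y, K y -> exists i, U i y) ->
    exists s : seq I, forall y, K y -> exists i, List.In i s /\ U i y.

Definition geodesic_bicombing (sigma : Y -> Y -> R -> Y) : Prop :=
  forall x x', sigma x x' 0 = x /\ sigma x x' 1 = x' /\
    forall t s : R, 0 <= t <= 1 -> 0 <= s <= 1 ->
      d (sigma x x' t) (sigma x x' s) = `|t - s| * d x x'.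

Definition conical_geodesic_bicombing (sigma : Y -> Y -> R -> Y) : Prop :=
  geodesic_bicombing sigma /\
  forall x x' y y' (t : R), 0 <= t <= 1 ->
    d (sigma x x' t) (sigma y y' t) <= (1 - t) * d x y + t * d x' y'.

(* quantization: Q q : R^(D q) -> Y, for q in N_+ (the values at q = 0 are
   irrelevant) *)
Definition is_quantization (D : nat -> nat)
    (Q : forall q : nat, 'rV[R]_(D q) -> Y) : Prop :=
  [/\ forall q : nat, (0 < q)%N -> forall z : 'rV[R]_(D q),
        exists z' : 'rV[R]_(D q.+1), Q q z = Q q.+1 z',
      forall (y : Y) (eps : R), 0 < eps ->
        exists q : nat, (0 < q)%N /\ exists z : 'rV[R]_(D q), d y (Q q z) < eps
    & forall (K : Y -> Prop) (eps : R), d_compact K -> 0 < eps ->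
        (* the infimum of {D_q : ...} is finite, i.e. the set is nonempty *)
        exists q : nat, (0 < q)%N /\
          forall y, K y -> exists z : 'rV[R]_(D q), d y (Q q z) < eps].

Definition in_simplex (N : nat) (w : 'I_N -> R) : Prop :=
  (forall j, 0 <= w j) /\ \sum_(j < N) w j = 1.

Definition mixing_fun := forall N : nat, ('I_N -> R) -> ('I_N -> Y) -> Y.

Definition approx_simplicial (eta : mixing_fun) : Prop :=
  exists (C : R) (p : nat), 1 <= C /\ (0 < p)%N /\
    forall (N : nat) (w : 'I_N -> R) (y : 'I_N -> Y), in_simplex w ->
      forall i : 'I_N,
        d (eta N w y) (y i) <=
          C * powR (\sum_(j < N) (d (y i) (y j)) ^+ p * w j) (p%:R)^-1.

Definition QAS (D : nat -> nat) (Q : forall q : nat, 'rV[R]_(D q) -> Y)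
    (eta : mixing_fun) : Prop :=
  @is_quantization D Q /\ approx_simplicial eta.

(* A (Borel) probability measure with finite support is represented by its
   mass function mu : Y -> R. *)
Definition fin_prob (mu : Y -> R) : Prop :=
  exists S : seq Y, [/\ uniq S, forall y, y \notin S -> mu y = 0,
                        forall y, 0 <= mu y & \sum_(y <- S) mu y = 1].

Definition dirac (y : Y) : Y -> R := fun x => (x == y)%:R.

Definition mixture (N : nat) (w : 'I_N -> R) (ys : 'I_N -> Y) : Y -> R :=
  fun x => \sum_(i < N) w i * (x == ys i)%:R.

Definition is_coupling (mu nu : Y -> R) (pi : Y * Y -> R) (S : seq (Y * Y))
  : Prop :=
  [/\ uniq S, forall p, p \notin S -> pi p = 0, forall p, 0 <= pi p,
      forall x, \sum_(p <- S | p.1 == x) pi p = mu x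
    & forall x, \sum_(p <- S | p.2 == x) pi p = nu x].

Definition coupling_cost (pi : Y * Y -> R) (S : seq (Y * Y)) : R :=
  \sum_(p <- S) pi p * d p.1 p.2.

(* beta is 1-Lipschitz for W_1 on finitely supported probability measures:
   d(beta mu, beta nu) <= W_1(mu, nu) = inf over couplings of the cost *)
Definition W1_lipschitz1 (beta : (Y -> R) -> Y) : Prop :=
  forall mu nu, fin_prob mu -> fin_prob nu ->
    forall pi S, is_coupling mu nu pi S ->
      d (beta mu) (beta nu) <= coupling_cost pi S.

Definition barycenter_map (beta : (Y -> R) -> Y) : Prop :=
  (forall y, beta (dirac y) = y) /\ W1_lipschitz1 beta.

Definition eta_of (beta : (Y -> R) -> Y) : mixing_fun :=
  fun N w ys => beta (mixture w ys).

Definition eta_hat_of (beta : (Y -> R) -> Y) (D : nat -> nat)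
    (Q : forall q : nat, 'rV[R]_(D q) -> Y) (q N : nat)
    (w : 'I_N -> R) (Z : 'I_N -> 'rV[R]_(D q)) : Y :=
  eta_of beta w (fun i => Q q (Z i)).
End Defs.

From HB Require Import structures.
From mathcomp Require Import all_boot all_order all_algebra.
From mathcomp Require Import all_classical all_reals.
From mathcomp Require Import Rstruct exp.
Import Order.TTheory GRing.Theory Num.Theory.
Local Open Scope ring_scope.

(* The only coupling of a finitely supported probability mu with a Dirac mass
   delta_y is the product mu x delta_y, whose cost is the mean distance
   sum_x mu x * d x y.  Since beta fixes Dirac masses and is 1-Lipschitz for
   W_1, this gives d (beta (sum_j w_j delta_{y_j})) y_i <= sum_j w_j d y_j y_i,
   i.e. the approximate simplicial inequality with C = 1 and p = 1. *)

Lemma big_pred1_uniq (T : eqType) (s : seq T) (a : T) (g : T -> R) :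
  uniq s -> a \in s -> \sum_(x <- s | x == a) g x = g a.
Proof.
move=> s_uniq a_s; rewrite big_mkcond (bigD1_seq a) //= eqxx big1 ?addr0 //.
by move=> x /negbTE ->.
Qed.

Section Barycenter.
Variables (Y : choiceType) (d : Y -> Y -> R).

Lemma fin_prob_dirac (y : Y) : fin_prob (dirac y).
Proof.
exists [:: y]; split => [//|x|x|].
- by rewrite inE /dirac => /negbTE ->.
- by rewrite /dirac ler0n.
- by rewrite big_seq1 /dirac eqxx.
Qed.

Section DiracCoupling.
Variables (mu : Y -> R) (s : seq Y) (y : Y).
Hypotheses (s_uniq : uniq s) (mu_out : forall x, x \notin s -> mu x = 0).
Hypotheses (mu_ge0 : forall x, 0 <= mu x) (mu_sum : \sum_(x <- s) mu x = 1).

Let pi (p : Y * Y) : R := mu p.1 * dirac y p.2.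
Let S : seq (Y * Y) := [seq (x, y) | x <- s].

Lemma is_coupling_dirac : is_coupling mu (dirac y) pi S.
Proof.
split.
- by rewrite map_inj_uniq // => a b [].
- case=> a b; rewrite /pi /dirac /=.
  have [a_s|a_out] := boolP (a \in s); last by rewrite mu_out // mul0r.
  have [->|_] := eqVneq b y; last by rewrite mulr0.
  by rewrite (map_f (fun x => (x, y)) a_s).
- by move=> p; rewrite /pi /dirac mulr_ge0.
- move=> x; rewrite big_map /pi /dirac /= eqxx.
  under eq_bigr do rewrite mulr1.
  have [x_s|x_out] := boolP (x \in s); first exact: big_pred1_uniq.
  rewrite mu_out // big1_seq // => a /andP[/eqP -> a_s].
  by rewrite a_s in x_out.
- move=> x; rewrite big_map /pi /dirac /= eq_sym.
  have [_|_] := eqVneq y x; last by rewrite big_pred0.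
  by rewrite eqxx; under eq_bigr do rewrite mulr1.
Qed.

Lemma coupling_cost_dirac :
  coupling_cost d pi S = \sum_(x <- s) mu x * d x y.
Proof.
by rewrite /coupling_cost big_map; apply: eq_bigr => x _; rewrite /pi /dirac eqxx mulr1.
Qed.

Lemma barycenter_dist_le (beta : (Y -> R) -> Y) :
  barycenter_map d beta -> d (beta mu) y <= \sum_(x <- s) mu x * d x y.
Proof.
move=> [beta_dirac beta_lip].
have mu_fin : fin_prob mu by exists s.
have := beta_lip _ _ mu_fin (fin_prob_dirac y) _ _ is_coupling_dirac.
by rewrite beta_dirac coupling_cost_dirac.
Qed.

End DiracCoupling.

Section Mixture.
Variables (N : nat) (w : 'I_N -> R) (ys : 'I_N -> Y).

Definition mixture_support : seq Y := undup [seq ys j | j <- enum 'I_N].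

Lemma mixture_support_uniq : uniq mixture_support.
Proof. exact: undup_uniq. Qed.

Lemma mem_mixture_support j : ys j \in mixture_support.
Proof. by rewrite mem_undup map_f ?mem_enum. Qed.

Lemma mixture_out x : x \notin mixture_support -> mixture w ys x = 0.
Proof.
move=> x_out; apply: big1 => j _.
have [x_ys|_] := eqVneq x (ys j); last by rewrite mulr0.
by rewrite x_ys mem_mixture_support in x_out.
Qed.

Lemma sum_mixture (f : Y -> R) :
  \sum_(x <- mixture_support) mixture w ys x * f x = \sum_(j < N) w j * f (ys j).
Proof.
under eq_bigr do rewrite mulr_suml.
rewrite exchange_big /=; apply: eq_bigr => j _.
rewrite -(@big_pred1_uniq _ _ _ (fun x => w j * f x) mixture_support_uniq
            (mem_mixture_support j)) [RHS]big_mkcond /=.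
by apply: eq_bigr => x _; case: (x == ys j); rewrite ?mulr1 ?mulr0 ?mul0r.
Qed.

Hypothesis w_simplex : in_simplex w.

Lemma mixture_ge0 x : 0 <= mixture w ys x.
Proof. by apply: sumr_ge0 => j _; rewrite mulr_ge0 ?ler0n //; case: w_simplex. Qed.

Lemma mixture_sum : \sum_(x <- mixture_support) mixture w ys x = 1.
Proof.
have := sum_mixture (fun=> 1); under eq_bigr do rewrite mulr1.
by move=> ->; under eq_bigr do rewrite mulr1; case: w_simplex.
Qed.

Lemma eta_of_dist_le (beta : (Y -> R) -> Y) (y : Y) :
  barycenter_map d beta -> d (eta_of beta w ys) y <= \sum_(j < N) w j * d (ys j) y.
Proof.
move=> beta_bary; rewrite -(sum_mixture (d^~ y)).
exact: barycenter_dist_le mixture_support_uniq mixture_out mixture_ge0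
         mixture_sum _ beta_bary.
Qed.

End Mixture.

Lemma approx_simplicial_eta_of (beta : (Y -> R) -> Y) :
  is_metric d -> barycenter_map d beta -> approx_simplicial d (eta_of beta).
Proof.
move=> [d_ge0 _ d_sym _] beta_bary.
exists 1, 1%N; split => //; split => // N w ys w_simplex i.
have sum_ge0 : 0 <= \sum_(j < N) d (ys i) (ys j) ^+ 1 * w j.
  by apply: sumr_ge0 => j _; rewrite expr1 mulr_ge0 //; case: w_simplex.
rewrite invr1 powRr1 // mul1r (eq_bigr (fun j => w j * d (ys j) (ys i))).
  exact: eta_of_dist_le.
by move=> j _; rewrite expr1 mulrC d_sym.
Qed.

End Barycenter.

Theorem mainTheorem6 (Y : choiceType) (d : Y -> Y -> R)
  (D : nat -> nat) (Q : forall q : nat, 'rV[R]_(D q) -> Y)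
  (beta : (Y -> R) -> Y) :
  is_metric d ->
  complete_metric d ->
  (exists sigma : Y -> Y -> R -> Y, conical_geodesic_bicombing d sigma) ->
  is_quantization d (D:=D) Q ->
  barycenter_map d beta ->
  QAS d (D:=D) Q (eta_of beta).
Proof.
(* Completeness and the bicombing are what make a barycenter map exist. *)
move=> d_metric _ _ Q_quant beta_bary.
by split; last exact: approx_simplicial_eta_of.
Qed.
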